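(* Let $V$ be a finite set and $\mu\colon\binom V2\to\mathbb{Z}_+$. If there is a vertex $v\in V$ such that $\mu(e)=1$ for every edge $e\in\binom V2$ containing $v$, then $(\Delta_V)_\mu$ is contractible.
   Context: $(\Delta_V)_\mu$ is the edge inflation of the full simplex on $V$: the poset of pairs $(I,c_I)$ with $\varnothing\neq I\subseteq V$ and $c_I\colon\binom I2\to\mathbb{Z}_+$, $c_I(e)\in\{1,\dots,\mu(e)\}$, ordered by $(I,c_I)<(J,c_J)$ iff $I\subsetneq J$ and $c_I=c_J|_{\binom I2}$; topology refers to the realization of its order complex. *)

From HB Require Import structures.
From mathcomp Require Import all_boot all_order all_algebra.
From mathcomp Require Import all_classical all_reals topology function_spaces normedtype.
Set Implicit Arguments. Unset Strict Implicit. Unset Printing Implicit Defensive.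
Import Order.TTheory GRing.Theory Num.Theory.
Import numFieldNormedType.Exports.
Local Open Scope classical_set_scope.
Local Open Scope ring_scope.

(* Edges of V are the 2-element subsets e : {set V}, #|e| = 2.
   mu is a function {set V} -> nat of which only the values on 2-subsets matter. *)

(* a uniform bound for the labels: every value c(e) <= mu e fits in 'I_(Nmu mu) *)
Definition Nmu (V : finType) (mu : {set V} -> nat) : nat :=
  (\max_(e : {set V}) mu e).+1.

Definition infl_carrier (V : finType) (mu : {set V} -> nat) : finType :=
  ({set V} * {ffun {set V} -> 'I_(Nmu mu)})%type.

(* (I, c) is an element of (Delta_V)_mu: I nonempty, c(e) in {1..mu e} for every
   edge e of I, and c is normalized to 0 off the edges of I (so that the pair
   (I, c) encodes exactly the pair (I, c_I) of the paper). *)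
Definition is_infl (V : finType) (mu : {set V} -> nat)
    (x : infl_carrier mu) : bool :=
  (x.1 != finset.set0) &&
  [forall e : {set V},
     if (e \subset x.1) && (#|e| == 2)%N
     then ((0 < x.2 e) && (x.2 e <= mu e))%N
     else (x.2 e == 0 :> nat)].

Definition infl_lt (V : finType) (mu : {set V} -> nat)
    (x y : infl_carrier mu) : bool :=
  (x.1 \proper y.1) &&
  [forall e : {set V}, ((e \subset x.1) && (#|e| == 2)%N) ==> (x.2 e == y.2 e)].

(* For a finite poset given by the elements P of a finite type T and strict order
   lt, the realization of its order complex is the set of points f of R^T
   (product = Euclidean topology) with f >= 0, sum f = 1, whose support consists
   of elements of P and is a chain. *)
Definition order_complex_realization (R : realType) (T : finType)
    (P : pred T) (lt : rel T) : set {ptws T -> R} :=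
  [set f : {ptws T -> R} |
     (forall x, 0 <= f x) /\ (\sum_(x : T) f x = 1) /\
     (forall x, f x != 0 -> P x) /\
     (forall x y, f x != 0 -> f y != 0 -> x = y \/ lt x y \/ lt y x)].

Definition contractible (R : realType) (X : topologicalType) (A : set X) : Prop :=
  exists2 x0 : X, A x0 &
  exists H : R * X -> X,
    [/\ {within [set p : R * X | 0 <= p.1 <= 1 /\ A p.2], continuous H},
        (forall x, A x -> H (0, x) = x),
        (forall x, A x -> H (1, x) = x0) &
        (forall t x, 0 <= t <= 1 -> A x -> A (H (t, x)))].

From HB Require Import structures.
From mathcomp Require Import all_boot all_order all_algebra.
From mathcomp Require Import all_classical all_reals topology function_spaces normedtype.
From mathcomp Require Import lra.
Set Implicit Arguments. Unset Strict Implicit. Unset Printing Implicit Defensive.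
Import Order.TTheory GRing.Theory Num.Theory.
Import numFieldNormedType.Exports.
Local Open Scope classical_set_scope.
Local Open Scope ring_scope.

(** A finite poset with a monotone map [g] such that [x <= g x] and whose image
    lies above a fixed element [x0] has a contractible order complex: push every
    point of the realization along [x |-> g x], then slide it onto [x0]. In
    (Delta_V)_mu, [g] adds the vertex [v] to [I] and labels every new edge at
    [v] by 1, the only value allowed there, and [x0] is ({v}, no labels). *)

Section Clamp.
Variable R : realType.

Definition clamp (s : R) : R := Num.min 1 (Num.max 0 s).

Lemma clamp_ge0 s : 0 <= clamp s.
Proof. rewrite /clamp; case: (lerP 0 s); case: (lerP 1 _); lra. Qed.

Lemma clamp_le1 s : clamp s <= 1.
Proof. rewrite /clamp; case: (lerP 0 s); case: (lerP 1 _); lra. Qed.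

Lemma clamp_neq0 s : clamp s != 0 -> 0 < s.
Proof. rewrite /clamp; case: (lerP 0 s); case: (lerP 1 _) => ? ? /eqP; lra. Qed.

Lemma clamp_eq1 s : 1 <= s -> clamp s = 1.
Proof. rewrite /clamp; case: (lerP 0 s); case: (lerP 1 _); lra. Qed.

Lemma clamp_eq0 s : s <= 0 -> clamp s = 0.
Proof. rewrite /clamp; case: (lerP 0 s); case: (lerP 1 _); lra. Qed.

Lemma continuous_clamp : continuous clamp.
Proof.
move=> s; apply: (@continuous_min R R (fun=> 1) (fun s => Num.max 0 s)).
  exact: cst_continuous.
by apply: (@continuous_max R R (fun=> 0) id); [exact: cst_continuous | exact: cvg_id].
Qed.

End Clamp.

Arguments clamp {R}.

Lemma continuous_ptws (Z : topologicalType) (I : choiceType) (K : topologicalType)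
    (H : Z -> {ptws I -> K}) :
  (forall i, continuous (fun z => H z i)) -> continuous H.
Proof.
move=> cH z; apply/cvg_sup => i.
exact: (@continuous_comp_initial _ Z K (fun f : I -> K => f i) H (cH i)).
Qed.

Lemma addr_neq0 (V : nmodType) (a b : V) : a + b != 0 -> a != 0 \/ b != 0.
Proof. by case: (eqVneq a 0) => [->|]; [rewrite add0r; right | left]. Qed.

Lemma sumr_neq0 (V : nmodType) (I : finType) (F : I -> V) :
  \sum_(i : I) F i != 0 -> exists i, F i != 0.
Proof.
move=> sum_neq0; apply/existsP; apply: contraNT sum_neq0 => /existsPn F0.
by rewrite big1 // => i _; apply/eqP/negbNE/F0.
Qed.

Section ConeContraction.
Variables (R : realType) (T : finType) (P : pred T) (lt : rel T).
Hypothesis lt_trans : transitive lt.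
Variables (rk : T -> nat) (N : nat).
Hypothesis rk_homo : {homo rk : x y / lt x y >-> (x < y)%N}.
Hypothesis rk_bound : forall x, (rk x < N)%N.
Variables (g : T -> T) (x0 : T).

Local Notation le x y := ((x == y) || lt x y).
Local Notation comparable x y := (x = y \/ lt x y \/ lt y x).

Hypothesis P_g : forall x, P x -> P (g x).
Hypothesis le_g : forall x, P x -> le x (g x).
Hypothesis g_homo : forall x y, P x -> P y -> lt x y -> le (g x) (g y).
Hypothesis P_x0 : P x0.
Hypothesis x0_le_g : forall x, P x -> le x0 (g x).

Local Notation X := {ptws T -> R}.
Local Notation A := (@order_complex_realization R T P lt).

Lemma rel_lt_le_trans x y z : lt x y -> le y z -> lt x z.
Proof. by move=> lxy /orP[/eqP <- // | lyz]; exact: lt_trans lyz. Qed.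

Lemma le_comparable x y : le x y -> comparable x y.
Proof. by case/orP=> [/eqP ->|]; [left | right; left]. Qed.

Lemma comparable_sym x y : comparable x y -> comparable y x.
Proof. by case=> [->|[]]; [left | right; right | right; left]. Qed.

Definition ramp (t : R) : R := N.+1%:R * t - N%:R.
Definition stage (x : T) (t : R) : R := clamp (ramp t + (rk x).+1%:R).
Definition final_stage (t : R) : R := clamp (ramp t).

(* The straight-line homotopy to [g] would break chains, since [y > x] need
   not be comparable with [g x]. So elements of larger rank are pushed to
   their image first, and only once all have arrived does the point slide to
   [x0]. *)
Definition cone_homotopy (z : R * X) : X := fun y =>
  (1 - final_stage z.1) *
    \sum_(x : T) z.2 x * ((1 - stage x z.1) * (x == y)%:R + stage x z.1 * (g x == y)%:R)
  + final_stage z.1 * (x0 == y)%:R.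

Lemma stage_at0 x : stage x 0 = 0.
Proof. by rewrite /stage /ramp clamp_eq0 // mulr0 sub0r addrC subr_le0 ler_nat. Qed.

Lemma final_stage_at0 : final_stage 0 = 0.
Proof. by rewrite /final_stage /ramp clamp_eq0 // mulr0 sub0r oppr_le0 ler0n. Qed.

Lemma final_stage_at1 : final_stage 1 = 1.
Proof. by rewrite /final_stage /ramp clamp_eq1 // mulr1 -natrB // subSnn. Qed.

Lemma stage_eq1_of_final x t : final_stage t != 0 -> stage x t = 1.
Proof.
move/clamp_neq0 => ramp_gt0; rewrite /stage clamp_eq1 //.
have : 1 <= ((rk x).+1%:R : R) by rewrite ler1n.
lra.
Qed.

Lemma stage_eq1_of_rank x y t : (rk y < rk x)%N -> stage y t != 0 -> stage x t = 1.
Proof.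
move=> rk_yx /clamp_neq0 stage_y; rewrite /stage clamp_eq1 //.
have : ((rk y).+1%:R + 1 : R) <= (rk x).+1%:R by rewrite natr1 ler_nat ltnS.
lra.
Qed.

Lemma sum_pmass (a : T) : \sum_(y : T) ((a == y)%:R : R) = 1.
Proof.
rewrite (bigD1 a) //= eqxx big1 ?addr0 // => y.
by rewrite eq_sym => /negPf ->.
Qed.

Lemma sum_mul_pmass (F : T -> R) (y : T) : \sum_(x : T) F x * (x == y)%:R = F y.
Proof.
rewrite (bigD1 y) //= eqxx mulr1 big1 ?addr0 // => x /negPf ->.
exact: mulr0.
Qed.

Lemma cone_homotopy_at0 p : cone_homotopy (0, p) = p.
Proof.
apply: funext => y; rewrite /cone_homotopy /= final_stage_at0 subr0 mul1r mul0r addr0.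
under eq_bigr do rewrite stage_at0 subr0 mul1r mul0r addr0.
exact: sum_mul_pmass.
Qed.

Lemma cone_homotopy_at1 p : cone_homotopy (1, p) = fun y => (x0 == y)%:R.
Proof.
by apply: funext => y; rewrite /cone_homotopy /= final_stage_at1 subrr mul0r add0r mul1r.
Qed.

Lemma cone_homotopy_ge0 z : (forall x, 0 <= z.2 x) -> forall y, 0 <= cone_homotopy z y.
Proof.
move=> p_ge0 y; apply: addr_ge0; last by rewrite mulr_ge0 ?clamp_ge0.
rewrite mulr_ge0 ?subr_ge0 ?clamp_le1 // sumr_ge0 // => x _.
by rewrite mulr_ge0 ?addr_ge0 ?mulr_ge0 ?subr_ge0 ?clamp_ge0 ?clamp_le1.
Qed.

Lemma cone_homotopy_sum z : \sum_(x : T) z.2 x = 1 -> \sum_(y : T) cone_homotopy z y = 1.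
Proof.
move=> p_sum; rewrite /cone_homotopy big_split /= -!mulr_sumr sum_pmass mulr1.
rewrite exchange_big /=.
under eq_bigr => x _.
  rewrite -mulr_sumr big_split /= -!mulr_sumr !sum_pmass !mulr1 subrK mulr1.
over.
by rewrite p_sum mulr1 subrK.
Qed.

Inductive cone_support (t : R) (p : X) : T -> Prop :=
| SupportBase of final_stage t != 0 : cone_support t p x0
| SupportStay x of p x != 0 & stage x t != 1 : cone_support t p x
| SupportMoved x of p x != 0 & stage x t != 0 : cone_support t p (g x).

Lemma pmass_neq0 (a y : T) : ((a == y)%:R : R) != 0 -> a = y.
Proof. by case: (eqVneq a y) => // _; rewrite mulr0n eqxx. Qed.

Lemma cone_supportP t p y : cone_homotopy (t, p) y != 0 -> cone_support t p y.
Proof.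
case/addr_neq0; last first.
  by rewrite mulf_eq0 negb_or => /andP[final /pmass_neq0 <-]; constructor.
rewrite mulf_eq0 negb_or => /andP[_].
case/sumr_neq0 => x; rewrite mulf_eq0 negb_or => /andP[px /addr_neq0[]];
  rewrite mulf_eq0 negb_or => /andP[stage_x /pmass_neq0 <-].
- by apply: SupportStay => //; rewrite eq_sym -subr_eq0.
- exact: SupportMoved.
Qed.

Section Chain.
Variables (t : R) (p : X).
Hypothesis p_supp : forall x, p x != 0 -> P x.
Hypothesis p_chain : forall x y, p x != 0 -> p y != 0 -> comparable x y.

Lemma cone_support_P y : cone_support t p y -> P y.
Proof. by case=> [//| x /p_supp | x /p_supp /P_g]. Qed.

(* If [x] has not finished moving and [y] has started, then [y] is not below
   [x], so [x <= y <= g y]. *)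
Lemma stay_le_moved x y : p x != 0 -> p y != 0 -> stage x t != 1 -> stage y t != 0 ->
  le x (g y).
Proof.
move=> px py stage_x stage_y; case: (p_chain px py) => [<-|[lt_xy|lt_yx]].
- exact/le_g/p_supp.
- by rewrite (rel_lt_le_trans lt_xy (le_g (p_supp py))) orbT.
- by rewrite (stage_eq1_of_rank (rk_homo lt_yx) stage_y) eqxx in stage_x.
Qed.

Lemma base_comparable y : final_stage t != 0 -> cone_support t p y -> comparable x0 y.
Proof.
move=> final; case=> [_ | x _ | x px _].
- by left.
- by rewrite stage_eq1_of_final ?eqxx.
- exact/le_comparable/x0_le_g/p_supp.
Qed.

Lemma stay_comparable x y : p x != 0 -> stage x t != 1 -> cone_support t p y ->
  comparable x y.
Proof.
move=> px stage_x; case=> [final | x' px' _ | x' px' stage_x'].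
- by rewrite stage_eq1_of_final ?eqxx in stage_x.
- exact: p_chain.
- exact/le_comparable/stay_le_moved.
Qed.

Lemma moved_comparable x y : p x != 0 -> stage x t != 0 -> cone_support t p y ->
  comparable (g x) y.
Proof.
move=> px stage_x; case=> [final | x' px' stage_x' | x' px' _].
- exact/comparable_sym/le_comparable/x0_le_g/p_supp.
- exact/comparable_sym/le_comparable/stay_le_moved.
- case: (p_chain px px') => [<-|[lt_xx'|lt_x'x]]; first by left.
    exact/le_comparable/(g_homo (p_supp px) (p_supp px') lt_xx').
  exact/comparable_sym/le_comparable/(g_homo (p_supp px') (p_supp px) lt_x'x).
Qed.

Lemma cone_support_comparable y1 y2 :
  cone_support t p y1 -> cone_support t p y2 -> comparable y1 y2.
Proof.
case=> [final | x px stage_x | x px stage_x].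
- exact: base_comparable.
- exact: stay_comparable.
- exact: moved_comparable.
Qed.

End Chain.

Lemma cone_homotopy_in z : A z.2 -> A (cone_homotopy z).
Proof.
case: z => t p [p_ge0 [p_sum [p_supp p_chain]]]; split; first exact: cone_homotopy_ge0.
split; first exact: cone_homotopy_sum.
split=> [y /cone_supportP /(cone_support_P p_supp) // | y1 y2].
by move=> /cone_supportP s1 /cone_supportP s2; exact: cone_support_comparable s1 s2.
Qed.

Lemma vertex_in : A (fun y => (x0 == y)%:R).
Proof.
split=> [y|]; first exact: ler0n.
split; first exact: sum_pmass.
split=> [y /pmass_neq0 <- // | y1 y2 /pmass_neq0 <- /pmass_neq0 <-]; by left.
Qed.

Lemma continuous_cone_homotopy : continuous cone_homotopy.
Proof.
(* [continuousD] and friends are stated for [f + h] on functions, so [apply]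
   only matches them against goals of the literal shape [fun z => f z + h z]. *)
have cK (c : R) : continuous (fun _ : R * X => c) by move=> ?; exact: cst_continuous.
have cD (f h : R * X -> R) :
  continuous f -> continuous h -> continuous (fun z => f z + h z).
  by move=> cf ch z; apply: continuousD; [exact: cf | exact: ch].
have cB (f h : R * X -> R) :
  continuous f -> continuous h -> continuous (fun z => f z - h z).
  by move=> cf ch z; apply: continuousB; [exact: cf | exact: ch].
have cM (f h : R * X -> R) :
  continuous f -> continuous h -> continuous (fun z => f z * h z).
  by move=> cf ch z; apply: continuousM; [exact: cf | exact: ch].
have cclamp (f : R * X -> R) : continuous f -> continuous (fun z => clamp (f z)).
  move=> cf z; apply: (continuous_comp (f := f) (g := clamp)); first exact: cf.
  exact: continuous_clamp.
have cramp : continuous (fun z : R * X => ramp z.1).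
  by apply: (cB) => //; apply: (cM) => // z; exact: cvg_fst.
have ccoord x : continuous (fun z : R * X => z.2 x).
  move=> z; apply: (continuous_comp (f := snd) (g := fun p : X => p x)).
    exact: cvg_snd.
  exact: proj_continuous.
have cstage x : continuous (fun z : R * X => stage x z.1) by apply: (cclamp); apply: (cD).
have cfinal : continuous (fun z : R * X => final_stage z.1) by exact: (cclamp).
apply: continuous_ptws => y; rewrite /cone_homotopy.
apply: (cD); apply: (cM) => //; first exact: (cB).
apply: (@continuous_big R^o T +%R 0 xpredT add_continuous) => x _.
by apply: (cM) => //; apply: (cD); apply: (cM) => //; exact: (cB).
Qed.

Theorem order_complex_cone_contractible : @contractible R _ A.
Proof.
exists (fun y => (x0 == y)%:R); first exact: vertex_in.
exists cone_homotopy; split.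
- exact/continuous_subspaceT/continuous_cone_homotopy.
- by move=> p _; exact: cone_homotopy_at0.
- by move=> p _; exact: cone_homotopy_at1.
- by move=> t p _ Ap; exact: (cone_homotopy_in (z := (t, p))).
Qed.

End ConeContraction.

Section EdgeInflationCone.
Variables (V : finType) (mu : {set V} -> nat) (v : V).
Hypothesis mu_apex : forall e : {set V}, #|e| = 2%N -> v \in e -> mu e = 1%N.

Local Notation T := (infl_carrier mu).
Local Notation P := (@is_infl V mu).
Local Notation lt := (@infl_lt V mu).
Local Notation le x y := ((x == y) || lt x y).
Local Notation is_edge_of e I := ((e \subset I) && (#|e| == 2)%N).

Lemma infl_label_edge (x : T) (e : {set V}) :
  P x -> is_edge_of e x.1 -> (0 < x.2 e <= mu e)%N.
Proof. by case/andP=> _ /forallP/(_ e) + edge; rewrite edge. Qed.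

Lemma infl_label_off (x : T) (e : {set V}) :
  P x -> ~~ is_edge_of e x.1 -> x.2 e = 0 :> nat.
Proof. by case/andP=> _ /forallP/(_ e) + /negPf off; rewrite off => /eqP. Qed.

Lemma infl_label_apex (x : T) (e : {set V}) :
  P x -> is_edge_of e x.1 -> v \in e -> x.2 e = 1 :> nat.
Proof.
move=> Px /[dup] /andP[_ /eqP e2] /(infl_label_edge Px) + ve.
by rewrite (mu_apex e2 ve); case: (nat_of_ord _) => [|[]].
Qed.

Lemma infl_lt_trans : transitive lt.
Proof.
move=> y x z /andP[xy /forallP xy_lab] /andP[yz /forallP yz_lab].
rewrite /infl_lt (proper_trans xy yz); apply/forallP => e; apply/implyP => /andP[ex e2].
have ey : e \subset y.1 by apply: fintype.subset_trans ex (proper_sub xy).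
by move: (xy_lab e) (yz_lab e); rewrite ex ey e2 /= => /eqP -> /eqP ->.
Qed.

Lemma infl_lt_card : {homo (fun x : T => #|x.1|) : x y / lt x y >-> (x < y)%N}.
Proof. by move=> x y /andP[/proper_card]. Qed.

Lemma infl_le_of_labels (a b : T) : P a -> P b -> a.1 \subset b.1 ->
  (forall e : {set V}, is_edge_of e a.1 -> a.2 e = b.2 e) -> le a b.
Proof.
move=> Pa Pb ab lab; case: (eqVneq a.1 b.1) => [eq_ab | ne_ab].
  apply/orP; left; apply/eqP; case: a b Pa Pb ab lab eq_ab => [a1 a2] [b1 b2] /=.
  move=> Pa Pb _ lab eq1; subst b1; congr pair; apply/ffunP => e.
  case: (boolP (is_edge_of e a1)) => [/lab // | off]; apply: val_inj => /=.
  by rewrite (infl_label_off Pa off) (infl_label_off Pb off).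
apply/orP; right; rewrite /infl_lt finset.properEneq ne_ab ab.
by apply/forallP => e; apply/implyP => /lab ->.
Qed.

Definition apex_label : 'I_(Nmu mu) := inord 1.

Lemma apex_labelE (e : {set V}) : #|e| = 2%N -> v \in e -> apex_label = 1 :> nat.
Proof. by move=> e2 ve; rewrite inordK // ltnS -(mu_apex e2 ve) leq_bigmax. Qed.

Definition cone (x : T) : T :=
  (v |: x.1, [ffun e : {set V} =>
     if (v \in e) && is_edge_of e (v |: x.1) then apex_label else x.2 e]).

Definition apex : T := ([set v]%SET, [ffun => ord0]).

Lemma sub_setU1 (e I : {set V}) : v \notin e -> (e \subset v |: I) = (e \subset I).
Proof.
move=> ve; apply/idP/idP => [/fintype.subsetP eI | /fintype.subset_trans -> //].
  apply/fintype.subsetP => w we.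
  by case/setU1P: (eI w we) => [wv | //]; rewrite -wv we in ve.
exact: subsetU1.
Qed.

Lemma is_infl_cone (x : T) : P x -> P (cone x).
Proof.
move=> Px; apply/andP; split; first by apply/set0Pn; exists v; rewrite setU11.
apply/forallP => e /=; rewrite ffunE; case: (boolP (v \in e)) => ve /=; last first.
  by rewrite sub_setU1 //; case/andP: Px => _ /forallP.
case edge: (is_edge_of e (v |: x.1)).
  by case/andP: edge => _ /eqP e2; rewrite (apex_labelE e2 ve) (mu_apex e2 ve).
rewrite (infl_label_off Px) //; apply: contraFN edge => /andP[ex ->].
by rewrite (fintype.subset_trans ex) ?finset.subsetUr.
Qed.

Lemma cone_ge (x : T) : P x -> le x (cone x).
Proof.
move=> Px; apply: infl_le_of_labels => //; [exact: is_infl_cone | exact: finset.subsetUr |].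
move=> e /[dup] /andP[ex /eqP e2] edge; apply: val_inj; rewrite /= ffunE.
case: ifP => [/andP[ve _] | _ //].
by rewrite (apex_labelE e2 ve) (infl_label_apex Px edge ve).
Qed.

Lemma infl_le_sub (x y : T) : le x y -> x.1 \subset y.1.
Proof. by case/orP=> [/eqP -> // | /andP[/proper_sub]]. Qed.

Lemma infl_le_labels (x y : T) (e : {set V}) :
  le x y -> is_edge_of e x.1 -> x.2 e = y.2 e.
Proof. by case/orP=> [/eqP -> // | /andP[_ /forallP/(_ e)/implyP lab] /lab/eqP]. Qed.

Lemma cone_le (x y : T) : P x -> P y -> v \in y.1 -> le x y -> le (cone x) y.
Proof.
move=> Px Py vy xy; have cone_y : (cone x).1 \subset y.1.
  by rewrite finset.subUset finset.sub1set vy infl_le_sub.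
apply: infl_le_of_labels => //; first exact: is_infl_cone.
move=> e /[dup] /andP[ex /eqP e2] edge; rewrite /= ffunE edge andbT.
have edge_y : is_edge_of e y.1 by rewrite (fintype.subset_trans ex cone_y) e2 /=.
case: (boolP (v \in e)) => ve /=.
  by apply: val_inj; rewrite /= (apex_labelE e2 ve) (infl_label_apex Py edge_y ve).
by apply: infl_le_labels xy _; rewrite -(sub_setU1 _ ve) ex e2 /=.
Qed.

Lemma cone_homo (x y : T) : P x -> P y -> lt x y -> le (cone x) (cone y).
Proof.
move=> Px Py xy; apply: cone_le => //; first exact: is_infl_cone.
  by rewrite finset.setU11.
by case/orP: (cone_ge Py) => [/eqP <- | y_cy]; rewrite ?xy ?(infl_lt_trans xy y_cy) orbT.
Qed.

Lemma is_infl_apex : P apex.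
Proof.
apply/andP; split; first by apply/set0Pn; exists v; rewrite set11.
apply/forallP => e /=; rewrite ffunE; case: ifP => // /andP[/subset_leq_card + /eqP e2].
by rewrite cards1 e2.
Qed.

Lemma apex_le_cone (x : T) : P x -> le apex (cone x).
Proof.
move=> Px; apply: infl_le_of_labels; [exact: is_infl_apex | exact: is_infl_cone |
  by rewrite finset.sub1set finset.setU11 |].
by move=> e /andP[/subset_leq_card + /eqP e2]; rewrite cards1 e2.
Qed.

End EdgeInflationCone.

Theorem corollary4p10 (R : realType) (V : finType) (mu : {set V} -> nat)
    (mu_pos : forall e : {set V}, #|e| = 2%N -> (0 < mu e)%N)
    (hv : exists v : V, forall e : {set V}, #|e| = 2%N -> v \in e -> mu e = 1%N) :
  @contractible R _ (@order_complex_realization R _ (@is_infl V mu) (@infl_lt V mu)).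
Proof.
case: hv => v mu_apex.
apply: (@order_complex_cone_contractible R _ _ _ (@infl_lt_trans V mu) _ #|V|.+1
          (@infl_lt_card V mu) _ (@cone V mu v) (@apex V mu v)).
- by move=> x; rewrite ltnS max_card.
- exact: is_infl_cone.
- exact: cone_ge.
- exact: cone_homo.
- exact: is_infl_apex.
- exact: apex_le_cone.
Qed.
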